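(* Let $Y$ be a dense subspace of a topological space $X$. If \textsc{Bob} has a winning strategy in $\mathsf{BM}_\mathrm{fin}(Y)$, then \textsc{Bob} has a winning strategy in $\mathsf{BM}_\mathrm{fin}(X)$.
   Context: The game $\mathsf{BM}_\mathrm{fin}(Z)$ on a space $Z$: \textsc{Alice} plays a non-empty open set $A_0$; \textsc{Bob} plays a finite collection $\mathcal{B}_0$ of non-empty open subsets of $A_0$; in inning $n+1$, for each $B \in \mathcal{B}_n$ \textsc{Alice} plays a non-empty open set $A_B \subseteq B$, letting $\mathcal{A}_{n+1}=\{A_B : B\in\mathcal{B}_n\}$, and \textsc{Bob} plays a finite collection $\mathcal{B}_{n+1}$ of non-empty open subsets of $\bigcup\mathcal{A}_{n+1}$; \textsc{Bob} wins if $\bigcap_{n}\bigcup\mathcal{B}_n\neq\emptyset$, otherwise \textsc{Alice} wins. *)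

From HB Require Import structures.
From mathcomp Require Import all_boot all_order all_algebra.
From mathcomp Require Import all_classical all_reals all_analysis.
Set Implicit Arguments. Unset Strict Implicit. Unset Printing Implicit Defensive.
Local Open Scope classical_set_scope.

(** Finite collections are encoded as lists
    [seq (set T)] (Bob is required to list pairwise distinct sets).
    To make the innings uniform we regard the start of the game as Bob
    having played the one-element collection [:: setT]; Alice's move in
    inning n is a function [a : nat -> set T], where [a i] is her answer
    A_B to the i-th set B of Bob's previous collection (values at indices
    >= size of that collection are irrelevant). *)

Definition bigU {T} (s : seq (set T)) : set T :=
  [set x | exists2 i, (i < size s)%N & nth set0 s i x].

(** A strategy of Bob: from the history of Alice's moves
    [a_0; ...; a_n] it returns Bob's collection B_n. *)
Definition bob_strategy (T : Type) := seq (nat -> set T) -> seq (set T).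

Section BMfin.
Context {T : topologicalType}.
Implicit Types (sigma : bob_strategy T) (alpha : nat -> nat -> set T).

Definition bob_move sigma alpha (n : nat) : seq (set T) :=
  sigma (mkseq alpha n.+1).

Definition prev_coll sigma alpha (n : nat) : seq (set T) :=
  if n is m.+1 then bob_move sigma alpha m else [:: setT].

Definition alice_legal sigma alpha (n : nat) : Prop :=
  forall i, (i < size (prev_coll sigma alpha n))%N ->
    [/\ open (alpha n i), alpha n i !=set0 &
        alpha n i `<=` nth set0 (prev_coll sigma alpha n) i].

Definition bob_legal sigma alpha (n : nat) : Prop :=
  let B := bob_move sigma alpha n in
  (forall i, (i < size B)%N ->
    [/\ open (nth set0 B i), nth set0 B i !=set0 &
        nth set0 B i `<=` bigU (mkseq (alpha n) (size (prev_coll sigma alpha n)))])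
  /\ (forall i j, (i < j)%N -> (j < size B)%N -> nth set0 B i <> nth set0 B j).

Definition bob_winning sigma : Prop :=
  forall alpha,
    (forall n, (forall m, (m <= n)%N -> alice_legal sigma alpha m) ->
               bob_legal sigma alpha n) /\
    ((forall n, alice_legal sigma alpha n) ->
       (\bigcap_n bigU (bob_move sigma alpha n)) !=set0).

End BMfin.

Definition BMfin_bob_wins (T : topologicalType) : Prop :=
  exists sigma : bob_strategy T, bob_winning sigma.

From Pilot Require Import Defs.
From HB Require Import structures.
From mathcomp Require Import all_boot all_order all_algebra.
From mathcomp Require Import all_classical all_reals all_analysis.
Local Open Scope classical_set_scope.

(** Bob in X simulates his winning strategy in Y on the traces [A `&` Y] of
    Alice's moves, which are nonempty open sets of Y because Y is dense.  He
    answers a set V open in Y by the largest open set of X whose trace lies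
    in V, cut down to the union of Alice's current moves; the trace of this
    answer is exactly V.  Hence his moves in X are legal and pairwise
    distinct, and a point of Y that survives the simulated play also
    survives the play in X. *)

(* Otherwise [bigU] resolves to the lemma [bigop.bigU]. *)
Local Notation bigU := Defs.bigU.

Lemma bigU_mkseq T (a : nat -> set T) k :
  bigU (mkseq a k) = \bigcup_(j in `I_k) a j.
Proof.
apply/seteqP; split=> x [j]; rewrite ?size_mkseq => jk.
  by rewrite nth_mkseq // => ajx; exists j.
by move=> ajx; exists j; rewrite ?size_mkseq ?nth_mkseq.
Qed.

Lemma preimage_bigU A B (f : A -> B) (s : seq (set B)) :
  f @^-1` bigU s = bigU (map (preimage f) s).
Proof.
apply/seteqP; split=> x [i]; rewrite ?size_map => si.
  by move=> sfx; exists i; rewrite ?size_map ?(nth_map set0).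
by rewrite (nth_map set0) // => sfx; exists i.
Qed.

Section dense_subspace.
Context {X : topologicalType} {Y : set X}.
Let S : topologicalType := set_type Y.
Let sv : S -> X := @set_val X Y.

Lemma open_subspaceP (V : set S) :
  open V <-> exists2 A, open A & sv @^-1` A = V.
Proof. by []. Qed.

Lemma dense_preimage_neq0 (A : set X) :
  dense Y -> open A -> A !=set0 -> sv @^-1` A !=set0.
Proof.
move=> dY oA A0; have [x [Ax Yx]] := dY A A0 oA.
by exists (exist _ x (mem_set Yx)).
Qed.

Definition extend (V : set S) : set X :=
  \bigcup_(U in [set U | open U /\ sv @^-1` U `<=` V]) U.

Lemma open_extend V : open (extend V).
Proof. by apply: bigcup_open => U []. Qed.

Lemma preimage_extendS V : sv @^-1` extend V `<=` V.
Proof. by move=> y [U [_ UV] Uy]; exact: UV. Qed.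

Lemma preimage_extendI (V : set S) (U : set X) :
  open V -> V `<=` sv @^-1` U -> sv @^-1` (extend V `&` U) = V.
Proof.
move=> /open_subspaceP[A oA AV] VU; apply/seteqP; split=> y.
  by move=> [Ey _]; exact: preimage_extendS Ey.
move=> Vy; split; last exact: VU.
by exists A; [split; rewrite // AV | rewrite -AV in Vy].
Qed.

Definition trace_move (a : nat -> set X) : nat -> set S :=
  fun i => sv @^-1` a i.

Hypothesis dY : dense Y.
Variable sigma : bob_strategy S.

(* Alice's move is a function on all of nat, meaningful only below the size
   of the collection she answers, so Bob recomputes that collection of the
   simulated play from the history. *)
Definition answered_coll (h : seq (nat -> set X)) : seq (set S) :=
  if (size h).-1 is n.+1 then sigma (map trace_move (take n.+1 h))
  else [:: setT].

Definition lift_strategy : bob_strategy X := fun h =>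
  [seq extend V `&` bigU (mkseq (last (fun=> setT) h) (size (answered_coll h)))
  | V <- sigma (map trace_move h)].

Section play.
Variable alpha : nat -> nat -> set X.
Let beta : nat -> nat -> set S := fun n => trace_move (alpha n).

Definition lift_set n (V : set S) : set X :=
  extend V `&` bigU (mkseq (alpha n) (size (prev_coll sigma beta n))).

Lemma map_trace_mkseq k : map trace_move (mkseq alpha k) = mkseq beta k.
Proof. by rewrite /mkseq -map_comp. Qed.

Lemma answered_collE n :
  answered_coll (mkseq alpha n.+1) = prev_coll sigma beta n.
Proof.
rewrite /answered_coll size_mkseq; case: n => [|n] //.
rewrite -[LHS]/(sigma (map trace_move (take n.+1 (mkseq alpha n.+2)))).
by rewrite mkseqS -cats1 take_size_cat ?size_mkseq // map_trace_mkseq.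
Qed.

Lemma bob_move_lift n :
  bob_move lift_strategy alpha n = map (lift_set n) (bob_move sigma beta n).
Proof.
by rewrite /bob_move /lift_strategy answered_collE [in last _ _]mkseqS last_rcons
  map_trace_mkseq.
Qed.

Lemma size_prev_coll_lift n :
  size (prev_coll lift_strategy alpha n) = size (prev_coll sigma beta n).
Proof. by case: n => //= n; rewrite bob_move_lift size_map. Qed.

Lemma preimage_lift_set n V : open V ->
  V `<=` bigU (mkseq (beta n) (size (prev_coll sigma beta n))) ->
  sv @^-1` lift_set n V = V.
Proof.
move=> oV Vsub; apply: preimage_extendI; rewrite // preimage_bigU.
by rewrite /mkseq -map_comp; exact: Vsub.
Qed.

Lemma preimage_lift_bob_move n : bob_legal sigma beta n ->
  {in bob_move sigma beta n, forall V, sv @^-1` lift_set n V = V}.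
Proof.
move=> [bL _] V /(nthP set0)[i ilt <-].
by have [oV _ Vsub] := bL i ilt; exact: preimage_lift_set.
Qed.

Lemma preimage_bigU_bob_move_lift n : bob_legal sigma beta n ->
  sv @^-1` bigU (bob_move lift_strategy alpha n) = bigU (bob_move sigma beta n).
Proof.
move=> /preimage_lift_bob_move liftK.
rewrite bob_move_lift preimage_bigU -map_comp; congr bigU.
by rewrite -[RHS]map_id; exact/eq_in_map.
Qed.

Lemma preimage_prev_coll_lift n i : (i < size (prev_coll sigma beta n))%N ->
  sv @^-1` nth set0 (prev_coll lift_strategy alpha n) i
  `<=` nth set0 (prev_coll sigma beta n) i.
Proof.
case: n => [|n] /=; first by case: i => [|[]].
by move=> ilt; rewrite bob_move_lift (nth_map set0) // => y [/preimage_extendS].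
Qed.

Lemma alice_legal_trace n :
  alice_legal lift_strategy alpha n -> alice_legal sigma beta n.
Proof.
move=> aL i ilt; have [oA A0 Asub] := aL i (ltac:(by rewrite size_prev_coll_lift)).
split; first by apply/open_subspaceP; exists (alpha n i).
  exact: dense_preimage_neq0.
by move=> y Ay; apply: preimage_prev_coll_lift => //; exact: Asub.
Qed.

Lemma bob_legal_lift n :
  alice_legal lift_strategy alpha n -> bob_legal sigma beta n ->
  bob_legal lift_strategy alpha n.
Proof.
move=> aL bobL; have [bL bD] := bobL.
have liftK i : (i < size (bob_move sigma beta n))%N ->
    sv @^-1` lift_set n (nth set0 (bob_move sigma beta n) i) =
    nth set0 (bob_move sigma beta n) i.
  by move=> ilt; apply: preimage_lift_bob_move bobL _ (mem_nth set0 ilt).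
rewrite /bob_legal bob_move_lift size_map; split=> [i ilt|i j ij jlt].
  rewrite (nth_map set0) //; have [oV [y Vy] _] := bL i ilt; split.
  - apply: openI; first exact: open_extend.
    rewrite bigU_mkseq; apply: bigcup_open => j.
    by rewrite /= -size_prev_coll_lift => /aL[].
  - by exists (sv y); rewrite -(liftK i ilt) in Vy.
  - by move=> x [_]; rewrite size_prev_coll_lift.
have ilt := ltn_trans ij jlt; rewrite !(nth_map set0) // => eqij.
by apply: (bD i j ij jlt); rewrite -liftK // eqij liftK.
Qed.

End play.

Lemma bob_winning_lift : bob_winning sigma -> bob_winning lift_strategy.
Proof.
move=> win alpha; have [legal survive] := win (fun n => trace_move (alpha n)).
have legal_trace n : (forall m, (m <= n)%N -> alice_legal lift_strategy alpha m) ->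
    bob_legal sigma (fun n => trace_move (alpha n)) n.
  by move=> aL; apply: legal => m mn; apply/alice_legal_trace/aL.
split=> [n aL|aL]; first by apply: bob_legal_lift (aL n _) (legal_trace n aL).
have [y Iy] := survive (fun n => alice_legal_trace _ _ (aL n)).
exists (sv y) => n _; have := Iy n I.
by rewrite -preimage_bigU_bob_move_lift //; exact: legal_trace.
Qed.

End dense_subspace.

Theorem lemma4p9 (X : topologicalType) (Y : set X) :
  dense Y -> BMfin_bob_wins (set_type Y) -> BMfin_bob_wins X.
Proof.
by move=> dY [sigma win]; exists (lift_strategy sigma); exact: bob_winning_lift.
Qed.
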